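(* Let $q$ be a prime power, $n=q^4-1$, and let $0\le a_2,a_3<q$ with $a_2+a_3<q-1$. Then the interlude $[(a_2,a_3,a_2,a_3),(a_2+1,a_3,a_2+1,a_3)]_M$ contains exactly $a_3(q-a_3)$ minimal representatives of SR-asymmetric cosets of cardinality $2$.
   Context: Identify $\mathbb{Z}_n$ with $\{0,\ldots,n-1\}$, all arithmetic modulo $n$. The $q$-adic 4-tuple $(a_0,a_1,a_2,a_3)$ denotes $a_0+a_1q+a_2q^2+a_3q^3$ with $0\le a_i<q$. The cyclotomic coset of $x$ with respect to $q^2$ is $I_x=\{x,\,q^2x\bmod n\}$; its minimal representative is its least element. The (Hermitian) reciprocal coset of $I_x$ is $I_{n-qx}$. $I_x$ is symmetric if $I_{n-qx}=I_x$ and asymmetric otherwise; for an asymmetric pair with minimal representatives $x<y$, $I_x$ is FR-asymmetric and $I_y$ is SR-asymmetric. For $0\le a<q-1$, $0\le b<q$, the interlude $[(a,b,a,b),(a+1,b,a+1,b)]_M$ is the set of integers $x$ with $(a,b,a,b)<x<(a+1,b,a+1,b)$ that are minimal representatives of a coset of cardinality $2$. *)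

From mathcomp Require Import all_boot.
Set Implicit Arguments. Unset Strict Implicit. Unset Printing Implicit Defensive.

Definition prime_power (q : nat) : Prop :=
  exists p k, prime p /\ 0 < k /\ q = p ^ k.

Definition qadic4 (q a0 a1 a2 a3 : nat) : nat :=
  a0 + a1 * q + a2 * q ^ 2 + a3 * q ^ 3.

(* Cyclotomic coset of x w.r.t. q^2 in Z_n (elements of Z_n as 0..n-1):
   I_x = {x mod n, q^2 x mod n}, listed as a sequence. *)
Definition coset (n q x : nat) : seq nat := [:: x %% n; (q ^ 2 * x) %% n].

Definition coset_eq (n q x y : nat) : bool :=
  all (fun z => z \in coset n q y) (coset n q x) &&
  all (fun z => z \in coset n q x) (coset n q y).

Definition minrep (n q x : nat) : nat := minn (x %% n) ((q ^ 2 * x) %% n).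

Definition coset_card (n q x : nat) : nat := size (undup (coset n q x)).

Definition recip (n q x : nat) : nat := (n - (q * x) %% n) %% n.

Definition symmetric_coset (n q x : nat) : bool := coset_eq n q (recip n q x) x.

Definition SR_asymmetric (n q x : nat) : bool :=
  ~~ symmetric_coset n q x && (minrep n q (recip n q x) < minrep n q x).

Definition minrep_card2 (n q x : nat) : bool :=
  (x < n) && (x == minrep n q x) && (coset_card n q x == 2).

Definition interlude (n q lo hi : nat) : seq nat :=
  [seq x <- iota lo.+1 (hi - lo.+1) | minrep_card2 n q x].

From mathcomp Require Import all_boot zify.
Set Implicit Arguments. Unset Strict Implicit. Unset Printing Implicit Defensive.

(* Put Q = q^2, so that n = Q^2 - 1.  Modulo n, multiplication by Q swaps the
   two base-Q digits of x and multiplication by q rotates its four base-q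
   digits, while x |-> n - x replaces every base-q digit d by q - 1 - d.
   Hence x = l + h Q is the minimal representative of a coset of size 2 iff
   h < l, and in the interlude these are the x = l + A Q with
   A = a2 + a3 q < l < Q.  Writing l = l0 + l1 q and c = q - 1 - d, the
   reciprocal coset of x = (l0,l1,a2,a3) is {(c3,c0,c1,c2), (c1,c2,c3,c0)}:
   the first element exceeds x since c2 > a3, and the second is below x iff
   c0 < a3, i.e. iff l0 >= q - a3.  Among q consecutive values of l exactly a3
   satisfy this, which gives a3 (q - a3) over the q - a3 blocks above a3 q;
   the values a3 q <= l <= A missing from the first block all have l0 <= a2
   < q - a3. *)

Lemma lt_digits2 b l h l' h' : l < b -> h < h' -> l + h * b < l' + h' * b.
Proof.
move=> lb hh; have : h.+1 * b <= h' * b by rewrite leq_mul2r hh orbT.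
rewrite mulSn; lia.
Qed.

Lemma ltn_digits2 b l h l' h' : l < b -> l' < b ->
  (l + h * b < l' + h' * b) = (h < h') || (h == h') && (l < l').
Proof.
move=> lb l'b; case: (ltngtP h h') => [hh|hh|<-] /=.
- exact: lt_digits2.
- by apply/negbTE; rewrite -leqNgt ltnW // lt_digits2.
- by rewrite ltn_add2r.
Qed.

Lemma digits2_lt b l h : l < b -> h < b -> l + h * b < b ^ 2.
Proof. by move=> lb hb; rewrite -mulnn -[b * b]add0n lt_digits2. Qed.

Lemma mul_rotate_mod b M r d : 0 < b * M ->
  b * (r + d * M) = d + r * b %[mod b * M - 1].
Proof.
move=> bM; have -> : b * (r + d * M) = d * (b * M - 1) + (d + r * b).
  have e : d * (b * M - 1) + d = b * (d * M).
    by rewrite mulnBr muln1 subnK ?leq_pmulr // mulnCA.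
  rewrite mulnDr [r * b]mulnC; lia.
by rewrite modnMDl.
Qed.

Lemma qadic4_split q d0 d1 d2 d3 :
  qadic4 q d0 d1 d2 d3 = (d0 + d1 * q) + (d2 + d3 * q) * q ^ 2.
Proof. by rewrite /qadic4 mulnDl -mulnA -expnS !addnA. Qed.

Lemma qadic4_rot1 q d0 d1 d2 d3 : 0 < q ->
  q * qadic4 q d0 d1 d2 d3 = qadic4 q d3 d0 d1 d2 %[mod q ^ 4 - 1].
Proof.
move=> q0; have q3 : q * q ^ 3 = q ^ 4 by rewrite -expnS.
rewrite -q3 /qadic4 mul_rotate_mod ?q3 ?expn_gt0 ?q0 //.
by congr (_ %% _); rewrite !mulnDl !expnS expn0 !muln1; lia.
Qed.

Lemma qadic4_rot2 q d0 d1 d2 d3 : 0 < q ->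
  q ^ 2 * qadic4 q d0 d1 d2 d3 = qadic4 q d2 d3 d0 d1 %[mod q ^ 4 - 1].
Proof.
move=> q0; have q4 : q ^ 2 * q ^ 2 = q ^ 4 by rewrite -expnD.
by rewrite -q4 !qadic4_split mul_rotate_mod // q4 expn_gt0 q0.
Qed.

Lemma qadic4D q d0 d1 d2 d3 e0 e1 e2 e3 :
  qadic4 q d0 d1 d2 d3 + qadic4 q e0 e1 e2 e3 = qadic4 q (d0 + e0) (d1 + e1) (d2 + e2) (d3 + e3).
Proof. rewrite /qadic4 !mulnDl; lia. Qed.

Lemma qadic4_max q : qadic4 q q.-1 q.-1 q.-1 q.-1 = q ^ 4 - 1.
Proof.
by case: q => [|p] //=; rewrite /qadic4 !expnS expn0 !muln1; nia.
Qed.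

Lemma qadic4_complement q d0 d1 d2 d3 : d0 < q -> d1 < q -> d2 < q -> d3 < q ->
  qadic4 q d0 d1 d2 d3 + qadic4 q (q.-1 - d0) (q.-1 - d1) (q.-1 - d2) (q.-1 - d3)
  = q ^ 4 - 1.
Proof.
move=> h0 h1 h2 h3; have q0 : 0 < q by apply: leq_ltn_trans h0.
have le d : d < q -> d <= q.-1 by move=> dq; rewrite -ltnS prednK.
by rewrite qadic4D !subnKC ?le // qadic4_max.
Qed.

Lemma qadic4_gt0 q d0 d1 d2 d3 : 0 < q ->
  (0 < qadic4 q d0 d1 d2 d3) = [|| 0 < d0, 0 < d1, 0 < d2 | 0 < d3].
Proof. by move=> q0; rewrite /qadic4 !addn_gt0 !muln_gt0 q0 !andbT !orbA. Qed.

Lemma coset_modn n q y : coset n q (y %% n) = coset n q y.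
Proof. by rewrite /coset modn_mod modnMmr. Qed.

Lemma minrep_modn n q y : minrep n q (y %% n) = minrep n q y.
Proof. by rewrite /minrep modn_mod modnMmr. Qed.

(* The final reduction only matters for x = 0, whose complement is n itself. *)
Lemma recip_qadic4 q d0 d1 d2 d3 : d0 < q -> d1 < q -> d2 < q -> d3 < q ->
  recip (q ^ 4 - 1) q (qadic4 q d0 d1 d2 d3)
  = qadic4 q (q.-1 - d3) (q.-1 - d0) (q.-1 - d1) (q.-1 - d2) %% (q ^ 4 - 1).
Proof.
move=> h0 h1 h2 h3; set n := q ^ 4 - 1.
have := qadic4_complement h3 h0 h1 h2; rewrite -/n.
set r := qadic4 q d3 d0 d1 d2; set R := qadic4 q _ _ _ _ => /esym comp.
rewrite /recip qadic4_rot1 -/n -/r; last exact: leq_ltn_trans h0.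
case: (ltngtP r n) => [rn|nr|rn].
- by rewrite (modn_small rn) {1}comp addKn.
- by move: nr; rewrite comp ltnNge leq_addr.
- have R0 : R = 0 by apply/eqP; rewrite -(eqn_add2l r) addn0 -comp rn.
  by rewrite rn modnn subn0 R0 modnn mod0n.
Qed.

Lemma minrep_card2_digits2 q l h : l < q ^ 2 -> h < q ^ 2 ->
  minrep_card2 (q ^ 4 - 1) q (l + h * q ^ 2) = (h < l).
Proof.
move=> lQ hQ; have q4 : q ^ 4 = q ^ 2 * q ^ 2 by rewrite -expnD.
set Q := q ^ 2 in lQ hQ q4 *; set n := q ^ 4 - 1; set x := l + h * Q.
have Q0 : 0 < Q := leq_ltn_trans (leq0n l) lQ.
have nE : n = Q.-1 + Q.-1 * Q by rewrite /n q4; nia.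
have swap : (Q * x) %% n = (h + l * Q) %% n by rewrite /n q4 mul_rotate_mod // muln_gt0 Q0.
have xs : (x < h + l * Q) = (h < l).
  by rewrite ltn_digits2 //; case: (ltngtP h l).
rewrite /minrep_card2 /minrep /coset_card /coset swap.
case: (ltnP h l) => [hl | lh].
- have hQ' : h < Q.-1 by rewrite -ltnS prednK //; apply: leq_ltn_trans hl lQ.
  have xn : x < n by rewrite nE -[Q.-1]add0n lt_digits2.
  have sn : h + l * Q < n by rewrite nE -addSn leq_add // leq_mul2r -ltnS prednK ?lQ ?orbT.
  have xls : x < h + l * Q by rewrite xs.
  rewrite !modn_small // xn (minn_idPl (ltnW xls)) eqxx /=.
  by rewrite inE (ltn_eqF xls).
- apply/negP => /andP [/andP [xn /eqP xm] card2].
  have sx : (h + l * Q) %% n <= x by rewrite (leq_trans (leq_mod _ _)) // leqNgt xs -leqNgt.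
  rewrite (modn_small xn) in xm card2.
  have sxE : (h + l * Q) %% n = x by rewrite {1}xm (minn_idPr sx).
  by move: card2; rewrite sxE /= inE eqxx.
Qed.

Lemma SR_asymmetric_qadic4 q a2 a3 l0 l1 :
  a2 + a3 < q.-1 -> l0 < q -> l1 < q -> a2 + a3 * q < l0 + l1 * q ->
  SR_asymmetric (q ^ 4 - 1) q (qadic4 q l0 l1 a2 a3) = (q - a3 <= l0).
Proof.
move=> a23 hl0 hl1 AL; set n := q ^ 4 - 1; set x := qadic4 q l0 l1 a2 a3.
have q0 : 0 < q := leq_ltn_trans (leq0n l0) hl0.
have ha2 : a2 < q by lia.
have ha3 : a3 < q by lia.
have /andP [/andP [xn /eqP xmin] _] : minrep_card2 n q x.
  by rewrite /x qadic4_split minrep_card2_digits2 ?digits2_lt.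
have l01 : (0 < l0) || (0 < l1).
  by rewrite -(andbT (0 < l1)) -q0 -muln_gt0 -addn_gt0 (leq_ltn_trans _ AL).
set R := qadic4 q (q.-1 - a3) (q.-1 - l0) (q.-1 - l1) (q.-1 - a2).
set S := qadic4 q (q.-1 - l1) (q.-1 - a2) (q.-1 - a3) (q.-1 - l0).
have Rn : R < n.
  have : 0 < qadic4 q a3 l0 l1 a2 by rewrite qadic4_gt0 //; case/orP: l01 => ->; rewrite ?orbT.
  have := qadic4_complement ha3 hl0 hl1 ha2; rewrite -/n -/R; lia.
have Sn : S < n.
  have : 0 < qadic4 q l1 a2 a3 l0 by rewrite qadic4_gt0 //; case/orP: l01 => ->; rewrite ?orbT.
  have := qadic4_complement hl1 ha2 ha3 hl0; rewrite -/n -/S; lia.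
have cosetR : coset n q (recip n q x) = [:: R; S].
  rewrite recip_qadic4 // coset_modn /coset qadic4_rot2 //.
  by rewrite !modn_small.
have xR : x < R.
  rewrite /x /R !qadic4_split lt_digits2 ?digits2_lt ?lt_digits2 //; lia.
have minR : minrep n q (recip n q x) = minn R S.
  by rewrite recip_qadic4 // minrep_modn /minrep qadic4_rot2 // !modn_small.
have xx' : x <= (q ^ 2 * x) %% n by rewrite {1}xmin geq_minr.
rewrite /SR_asymmetric /symmetric_coset /coset_eq cosetR minR -xmin.
case: (leqP (q - a3) l0) => hl.
- have Sx : S < x.
    rewrite /x /S !qadic4_split lt_digits2 ?digits2_lt ?lt_digits2 //; lia.
  rewrite (minn_idPr (ltnW (ltn_trans Sx xR))) Sx andbT /= /coset (modn_small xn).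
  by rewrite !inE (ltn_eqF Sx) (ltn_eqF (leq_trans Sx xx')) /= !andbF.
- have xS : x < S.
    rewrite /x /S !qadic4_split lt_digits2 ?digits2_lt // ltn_digits2 //; lia.
  by rewrite ltnNge leq_min (ltnW xR) (ltnW xS) andbF.
Qed.

Lemma count_leq_iota0 m k : count (leq m) (iota 0 k) = k - m.
Proof.
elim: k => // k IH; rewrite -addn1 iotaD count_cat IH /= addn0 add0n.
by case: leqP; lia.
Qed.

Lemma count_modn_geq_block q m j k : k <= q ->
  count (fun l => m <= l %% q) (iota (j * q) k) = k - m.
Proof.
move=> kq; rewrite -[j * q]addn0 iotaDl count_map -count_leq_iota0.
apply: eq_in_count => i; rewrite mem_iota add0n => /andP [_ ik] /=.
by rewrite modnMDl modn_small // (leq_trans ik kq).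
Qed.

Lemma count_modn_geq q m j k :
  count (fun l => m <= l %% q) (iota (j * q) (k * q)) = k * (q - m).
Proof.
elim: k j => [|k IH] j; first by rewrite !mul0n.
by rewrite mulSn iotaD count_cat count_modn_geq_block // -mulSnr IH mulSn.
Qed.

Lemma count_modn_geq_tail q a2 a3 : a2 + a3 < q ->
  count (fun l => q - a3 <= l %% q) (iota (a2 + a3 * q).+1 (q ^ 2 - (a2 + a3 * q).+1))
  = a3 * (q - a3).
Proof.
move=> a23; have a3q : a3.+1 * q <= q * q by rewrite leq_mul2r; apply/orP; right; lia.
have tail : iota (a3 * q) ((q - a3) * q)
          = iota (a3 * q) a2.+1 ++ iota (a2 + a3 * q).+1 (q ^ 2 - (a2 + a3 * q).+1).
  have -> : (a2 + a3 * q).+1 = a3 * q + a2.+1 by rewrite addnC addnS.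
  by rewrite -iotaD -mulnn mulnBl; congr iota; move: a3q; rewrite mulSn; lia.
have := count_modn_geq q (q - a3) a3 (q - a3).
rewrite tail count_cat count_modn_geq_block; last lia.
have -> : a2.+1 - (q - a3) = 0 by lia.
by rewrite add0n mulnC subKn //; lia.
Qed.

Lemma iota_interlude Q A : A < Q ->
  iota (A + A * Q).+1 (A.+1 + A.+1 * Q - (A + A * Q).+1)
  = map (addn (A * Q)) (iota A.+1 (Q - A.+1)) ++ map (addn (A.+1 * Q)) (iota 0 A.+1).
Proof.
move=> AQ; rewrite -!iotaDl.
rewrite (_ : A.+1 * Q + 0 = A * Q + A.+1 + (Q - A.+1)); last by rewrite mulSn; lia.
rewrite -iotaD; congr iota; lia.
Qed.

Theorem mainTheorem15 (q a2 a3 : nat) :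
  prime_power q -> a2 < q -> a3 < q -> a2 + a3 < q - 1 ->
  let n := q ^ 4 - 1 in
  count (SR_asymmetric n q)
    (interlude n q (qadic4 q a2 a3 a2 a3) (qadic4 q a2.+1 a3 a2.+1 a3))
  = a3 * (q - a3).
Proof.
move=> _ ha2 ha3; rewrite subn1 => a23 n.
have q0 : 0 < q := leq_ltn_trans (leq0n a2) ha2.
have a2q : a2.+1 < q by lia.
set A := a2 + a3 * q; have AQ : A.+1 < q ^ 2 := digits2_lt a2q ha3.
rewrite /interlude count_filter !qadic4_split addSn -/A.
rewrite iota_interlude ?(ltnW AQ) // count_cat !count_map.
rewrite (@eq_in_count _ _ pred0 (iota 0 A.+1)) ?count_pred0 ?addn0; last first.
  move=> l; rewrite mem_iota add0n => /andP [_ lA] /=.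
  by rewrite addnC minrep_card2_digits2 ?(ltn_trans lA) // (leq_gtF (ltnW lA)) andbF.
rewrite -(@count_modn_geq_tail q a2 a3); last lia.
apply: eq_in_count => l; rewrite mem_iota subnKC ?(ltnW AQ) // => /andP [Al lQ] /=.
have lE : l + A * q ^ 2 = qadic4 q (l %% q) (l %/ q) a2 a3.
  by rewrite qadic4_split [l %% q + _]addnC -divn_eq.
rewrite addnC minrep_card2_digits2 ?(ltnW AQ) // Al andbT lE SR_asymmetric_qadic4 //.
- by rewrite ltn_mod.
- by rewrite ltn_divLR // mulnn.
- by rewrite [l %% q + _]addnC -divn_eq.
Qed.
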